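(* Let $p\in(0,1/2]$, $b=\lfloor 1/p\rfloor$ (so $b\ge2$), and $m\ge1$ an integer. Let $D_U,D_V$ be integers with $m\le D_U\le bm$, $0\le D_V\le bm$, such that $D_U-m$ is an integer multiple of $b-1$ and $D_V$ is an integer multiple of $b$. Consider $$\Phi(x,y)=\sum_{i=1}^m\bigl(1-e^{-p\,y_i}\bigr)\cdot\max\{x_i-1,0\}$$ over integer vectors $x,y\in\{0,1,\dots,b\}^m$ with $\sum_i x_i=D_U$ and $\sum_i y_i=D_V$. Then $\Phi$ has a minimizer $(x^\star,y^\star)$ over this set in which every $x^\star_i\in\{1,b\}$ and every $y^\star_i\in\{0,b\}$. *)

From Stdlib Require Import Reals Lra Lia Arith.
Open Scope R_scope.

(* Vectors in {0..b}^m are represented as functions nat -> nat;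
   only the indices 0 .. m-1 are relevant (coordinate i+1 of the paper = index i). *)

Fixpoint rsum (n : nat) (f : nat -> R) : R :=
  match n with
  | O => 0
  | S k => rsum k f + f k
  end.

Fixpoint nsum (n : nat) (f : nat -> nat) : nat :=
  match n with
  | O => 0%nat
  | S k => (nsum k f + f k)%nat
  end.

Definition Phi (p : R) (m : nat) (x y : nat -> nat) : R :=
  rsum m (fun i => (1 - exp (- (p * INR (y i)))) * Rmax (INR (x i) - 1) 0).

Definition feasible (b m DU DV : nat) (x y : nat -> nat) : Prop :=
  (forall i, (i < m)%nat -> (x i <= b)%nat /\ (y i <= b)%nat) /\
  nsum m x = DU /\ nsum m y = DV.

(* Write f_b := 1 - e^{-p b}. By concavity of y |-> 1 - e^{-p y} on [0, b], each summand of Phi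
   dominates f_b * (y/b) * max (x - 1, 0), and since (b - x) (1 - y/b) >= 0 this dominates the
   affine function f_b * (x - 1 - (b - 1) (1 - y/b)). Summed over a feasible pair, the affine
   minorant only depends on D_U, D_V and m, so it bounds Phi from below uniformly. Put x = b on
   (D_U - m)/(b - 1) coordinates and y = b on D_V/b coordinates, the two blocks overlapping as
   little as possible: if they are disjoint, Phi = 0; otherwise every coordinate is one of
   (b, 0), (b, b), (1, b), where the minorant is attained, so Phi equals the lower bound. *)
From Stdlib Require Import Reals Arith Lra Lia Psatz.
Open Scope R_scope.

Lemma one_minus_exp_neg_chord s S :
  0 <= s <= S -> 0 < S -> s / S * (1 - exp (- S)) <= 1 - exp (- s).
Proof.
  intros [hs0 hsS] hS.
  set (t := s / S).
  assert (ht : t * S = s) by (unfold t; field; lra).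
  assert (ht0 : 0 <= t) by (unfold t; apply Rmult_le_pos; [lra | left; apply Rinv_0_lt_compat; lra]).
  assert (ht1 : t <= 1) by nra.
  assert (hsplit : exp (- S) = exp (s - S) * exp (- s)) by (rewrite <- exp_plus; f_equal; ring).
  assert (hinv : exp s * exp (- s) = 1)
    by (rewrite <- exp_plus, Rplus_opp_r; apply exp_0).
  (* After multiplying by e^s the claim reads (1 - t) e^s + t e^(s - S) >= 1,
     a convex combination of the tangent bounds e^z >= 1 + z at z = s and z = s - S. *)
  pose proof (exp_ineq1_le s).
  pose proof (exp_ineq1_le (s - S)).
  pose proof (exp_pos (- s)).
  assert (1 <= (1 - t) * exp s + t * exp (s - S)) by nra.
  rewrite hsplit. nra.
Qed.

Lemma exp_neg_le_1 z : 0 <= z -> exp (- z) <= 1.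
Proof.
  intros [hz | <-].
  - rewrite <- exp_0. left. apply exp_increasing. lra.
  - rewrite Ropp_0, exp_0. lra.
Qed.

Lemma rsum_le n f g : (forall i, (i < n)%nat -> f i <= g i) -> rsum n f <= rsum n g.
Proof.
  induction n as [|n IH]; simpl; intros hfg; [lra|].
  assert (rsum n f <= rsum n g) by (apply IH; intros; apply hfg; lia).
  specialize (hfg n (Nat.lt_succ_diag_r n)). lra.
Qed.

Lemma rsum_ext n f g : (forall i, (i < n)%nat -> f i = g i) -> rsum n f = rsum n g.
Proof.
  induction n as [|n IH]; simpl; intros hfg; [reflexivity|].
  rewrite (hfg n (Nat.lt_succ_diag_r n)), IH; auto.
Qed.

Lemma rsum_const0 n : rsum n (fun _ => 0) = 0.
Proof. induction n; simpl; lra. Qed.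

Definition block_vector (k a c : nat) : nat -> nat := fun i => if (i <? k)%nat then a else c.

Lemma nsum_block_vector n k a c :
  nsum n (block_vector k a c) = (Nat.min n k * a + (n - k) * c)%nat.
Proof.
  unfold block_vector.
  induction n as [|n IH]; cbn [nsum]; [reflexivity|].
  rewrite IH. destruct (Nat.ltb_spec n k).
  - rewrite (Nat.min_l n k), (Nat.min_l (S n) k) by lia.
    replace (n - k)%nat with 0%nat by lia. replace (S n - k)%nat with 0%nat by lia. lia.
  - rewrite (Nat.min_r n k), (Nat.min_r (S n) k) by lia.
    replace (S n - k)%nat with (S (n - k)) by lia. lia.
Qed.

Lemma floor_inv_ge_2 p b : 0 < p -> p <= 1 / 2 -> / p < INR b + 1 -> (2 <= b)%nat.
Proof.
  intros hp0 hp1 hb.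
  assert (2 <= / p).
  { replace 2 with (/ (1 / 2)) by field. apply Rinv_le_contravar; lra. }
  destruct (le_lt_dec 2 b) as [|hlt]; [assumption|].
  assert (INR b <= 1) by (apply (le_INR b 1); lia). lra.
Qed.

Definition phi_term (p : R) (x y : nat) : R :=
  (1 - exp (- (p * INR y))) * Rmax (INR x - 1) 0.

Definition phi_minorant (p : R) (b x y : nat) : R :=
  (1 - exp (- (p * INR b))) * (INR x - 1 - (INR b - 1) * (1 - INR y / INR b)).

Lemma phi_term_nonneg p x y : 0 <= p -> 0 <= phi_term p x y.
Proof.
  intros hp. unfold phi_term. apply Rmult_le_pos; [|apply Rmax_r].
  pose proof (exp_neg_le_1 (p * INR y)) as he.
  pose proof (pos_INR y). assert (0 <= p * INR y) by nra. lra.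
Qed.

Lemma phi_term_eq0 p x y : (x = 1%nat \/ y = 0%nat) -> phi_term p x y = 0.
Proof.
  unfold phi_term. intros [-> | ->]; simpl.
  - rewrite Rmax_right by lra. ring.
  - rewrite Rmult_0_r, Ropp_0, exp_0. ring.
Qed.

Lemma phi_term_ge_minorant p b x y :
  0 < p -> (1 <= b)%nat -> (x <= b)%nat -> (y <= b)%nat ->
  phi_minorant p b x y <= phi_term p x y.
Proof.
  intros hp hb hx hy. unfold phi_minorant, phi_term.
  apply le_INR in hb, hx, hy. simpl in hb.
  pose proof (pos_INR y) as hy0.
  set (f := 1 - exp (- (p * INR b))).
  set (v := INR y / INR b).
  assert (hf : 0 <= f).
  { unfold f. assert (exp (- (p * INR b)) <= 1) by (apply exp_neg_le_1; nra). lra. }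
  assert (hv0 : 0 <= v) by (unfold v; apply Rmult_le_pos; [lra | left; apply Rinv_0_lt_compat; lra]).
  assert (hv1 : v <= 1) by (unfold v; apply (Rmult_le_reg_r (INR b)); [lra | field_simplify; lra]).
  assert (hchord : v * f <= 1 - exp (- (p * INR y))).
  { replace v with (p * INR y / (p * INR b)) by (unfold v; field; lra).
    apply one_minus_exp_neg_chord; nra. }
  destruct x as [|x].
  - simpl. rewrite Rmax_right by lra.
    assert (0 <= f * ((INR b - 1) * (1 - v))) by (apply Rmult_le_pos; nra).
    nra.
  - rewrite S_INR in *. rewrite Rmax_left by (pose proof (pos_INR x); lra).
    replace (INR x + 1 - 1) with (INR x) by ring.
    pose proof (pos_INR x).
    assert (v * f * INR x <= (1 - exp (- (p * INR y))) * INR x) by (apply Rmult_le_compat_r; lra).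
    assert (0 <= f * ((INR b - 1 - INR x) * (1 - v))) by (apply Rmult_le_pos; nra).
    nra.
Qed.

Lemma phi_term_eq_minorant p b x y :
  (1 <= b)%nat -> (x = 1%nat \/ x = b) -> (y = 0%nat \/ y = b) -> (x = b \/ y = b) ->
  phi_term p x y = phi_minorant p b x y.
Proof.
  intros hb hx hy hxy. unfold phi_term, phi_minorant.
  assert (hbR : 1 <= INR b) by (apply (le_INR 1); exact hb).
  destruct hx as [-> | ->], hy as [-> | ->]; simpl.
  - destruct hxy as [<- | <-]; [simpl | lia].
    rewrite Rmax_right by lra. field.
  - rewrite Rmax_right by lra. field. lra.
  - rewrite Rmax_left by lra. rewrite Rmult_0_r, Ropp_0, exp_0. field. lra.
  - rewrite Rmax_left by lra. field. lra.
Qed.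

Definition Phi_lower_bound (p : R) (b m DU DV : nat) : R :=
  (1 - exp (- (p * INR b))) *
  (INR DU - INR m - (INR b - 1) * (INR m - INR DV / INR b)).

Lemma rsum_phi_minorant p b m x y :
  rsum m (fun i => phi_minorant p b (x i) (y i)) = Phi_lower_bound p b m (nsum m x) (nsum m y).
Proof.
  unfold phi_minorant, Phi_lower_bound.
  induction m as [|m IH]; cbn [rsum nsum].
  - simpl. unfold Rdiv. ring.
  - rewrite IH, !plus_INR, S_INR. unfold Rdiv. ring.
Qed.

Lemma Phi_ge_lower_bound p b m DU DV x y :
  0 < p -> (1 <= b)%nat -> feasible b m DU DV x y ->
  Phi_lower_bound p b m DU DV <= Phi p m x y.
Proof.
  intros hp hb [hbox [hDU hDV]].
  rewrite <- hDU, <- hDV, <- rsum_phi_minorant.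
  apply rsum_le. intros i hi. destruct (hbox i hi).
  apply phi_term_ge_minorant; assumption.
Qed.

Lemma Phi_nonneg p m x y : 0 <= p -> 0 <= Phi p m x y.
Proof.
  intros hp. rewrite <- (rsum_const0 m).
  apply rsum_le. intros i _. apply phi_term_nonneg, hp.
Qed.

Section BlockPair.

Variables (p : R) (b m k l : nat).
Hypotheses (hkm : (k <= m)%nat) (hlm : (l <= m)%nat).

Let xs := block_vector k b 1.
Let ys := block_vector (m - l) 0 b.

Lemma block_pair_feasible : (1 <= b)%nat -> feasible b m (m + k * (b - 1)) (l * b) xs ys.
Proof.
  intros hb. split; [|split].
  - intros i _. unfold xs, ys, block_vector. destruct (i <? k)%nat, (i <? m - l)%nat; lia.
  - unfold xs. rewrite nsum_block_vector, Nat.min_r by lia. nia.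
  - unfold ys. rewrite nsum_block_vector, Nat.min_r by lia.
    replace (m - (m - l))%nat with l by lia. lia.
Qed.

Lemma block_pair_extremal i : ((xs i = 1 \/ xs i = b) /\ (ys i = 0 \/ ys i = b))%nat.
Proof. unfold xs, ys, block_vector. destruct (i <? k)%nat, (i <? m - l)%nat; auto. Qed.

Lemma Phi_block_pair_disjoint : (k + l <= m)%nat -> Phi p m xs ys = 0.
Proof.
  intros hdisj. rewrite <- (rsum_const0 m). apply rsum_ext. intros i _.
  apply phi_term_eq0. unfold xs, ys, block_vector.
  destruct (Nat.ltb_spec i k), (Nat.ltb_spec i (m - l)); auto; lia.
Qed.

Lemma Phi_block_pair_overlap :
  (1 <= b)%nat -> (m < k + l)%nat -> Phi p m xs ys = Phi_lower_bound p b m (nsum m xs) (nsum m ys).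
Proof.
  intros hb hover. rewrite <- rsum_phi_minorant. apply rsum_ext. intros i _.
  apply phi_term_eq_minorant; [exact hb | apply block_pair_extremal | apply block_pair_extremal |].
  unfold xs, ys, block_vector.
  destruct (Nat.ltb_spec i k), (Nat.ltb_spec i (m - l)); auto; lia.
Qed.

End BlockPair.

Theorem mainTheorem9 (p : R) (b m DU DV : nat)
  (hp0 : 0 < p) (hp1 : p <= 1 / 2)
  (hb : INR b <= / p < INR b + 1)          (* b = floor (1/p) *)
  (hm : (1 <= m)%nat)
  (hDU : (m <= DU <= b * m)%nat)
  (hDV : (DV <= b * m)%nat)
  (hDUdiv : Nat.divide (b - 1) (DU - m))
  (hDVdiv : Nat.divide b DV) :
  exists xs ys : nat -> nat,
    feasible b m DU DV xs ys /\
    (forall i, (i < m)%nat -> (xs i = 1%nat \/ xs i = b) /\ (ys i = 0%nat \/ ys i = b)) /\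
    (forall x y : nat -> nat, feasible b m DU DV x y -> Phi p m xs ys <= Phi p m x y).
Proof.
  pose proof (floor_inv_ge_2 p b hp0 hp1 (proj2 hb)) as hb2.
  destruct hDUdiv as [k hk], hDVdiv as [l hl].
  assert (hkm : (k <= m)%nat) by nia.
  assert (hlm : (l <= m)%nat) by nia.
  replace DU with (m + k * (b - 1))%nat in * by lia. subst DV.
  pose proof (block_pair_feasible b m k l hkm hlm ltac:(lia)) as hfeas.
  exists (block_vector k b 1), (block_vector (m - l) 0 b).
  split; [exact hfeas | split; [intros i _; apply block_pair_extremal |]].
  intros x y hxy.
  destruct (le_lt_dec (k + l) m) as [hdisj | hover].
  - rewrite Phi_block_pair_disjoint by assumption. apply Phi_nonneg. lra.
  - destruct hfeas as (_ & hsx & hsy).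
    rewrite Phi_block_pair_overlap, hsx, hsy by (assumption || lia).
    apply Phi_ge_lower_bound; [assumption | lia | exact hxy].
Qed.
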